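(* Let $\mu\in\mathbb R\setminus\{0\}$ and $r=\frac{\mu}{e^{\mu}-1}$. Then for all $x\in[0,1]$, $$1-e^{-\mu x}\le\left(1-e^{-\mu}\right)x^{r}.$$
   Context: Here $x^r$ at $x=0$ is interpreted as $0$ (note $r>0$). *)

From Stdlib Require Import Reals.
Open Scope R_scope.

Definition rpow (x r : R) : R := if Rle_dec x 0 then 0 else Rpower x r.

From Stdlib Require Import Reals Lra.
From Coquelicot Require Import Coquelicot.
Open Scope R_scope.

(* With f(y) = 1 - exp(-mu y) and r = mu / (exp mu - 1), the function
   f(y) y^(-r) is nondecreasing on (0, 1]: its derivative has the sign of
   y f'(y) - r f(y), which after multiplying by exp(mu y) / r becomes
   y (exp mu - 1) - (exp (mu y) - 1) >= 0, i.e. convexity of exp.  Comparing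
   the values at x and 1 gives the inequality. *)

Lemma exp_chord_ge (m x : R) : 0 <= x <= 1 -> exp (m * x) - 1 <= x * (exp m - 1).
Proof.
  intros [hx0 hx1].
  (* tangent lines of exp at m x, evaluated at 0 and at m *)
  assert (tangent_at_0 : exp (m * x) * (1 - m * x) <= 1).
  { replace 1 with (exp (m * x) * exp (- (m * x))) at 2
      by (rewrite <- exp_plus, Rplus_opp_r; apply exp_0).
    apply Rmult_le_compat_l; [apply Rlt_le, exp_pos |].
    pose proof (exp_ineq1_le (- (m * x))); lra. }
  assert (tangent_at_m : exp (m * x) * (1 + m * (1 - x)) <= exp m).
  { replace (exp m) with (exp (m * x) * exp (m * (1 - x)))
      by (rewrite <- exp_plus; f_equal; ring).
    apply Rmult_le_compat_l; [apply Rlt_le, exp_pos |].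
    pose proof (exp_ineq1_le (m * (1 - x))); lra. }
  pose proof (exp_pos (m * x)); nra.
Qed.

Lemma div_exp_sub1_gt0 (m : R) : m <> 0 -> 0 < m / (exp m - 1).
Proof.
  intros hm; destruct (Rlt_or_le 0 m) as [hpos | hneg].
  - pose proof (exp_increasing 0 m hpos) as hexp; rewrite exp_0 in hexp.
    apply Rdiv_lt_0_compat; lra.
  - pose proof (exp_increasing m 0 ltac:(lra)) as hexp; rewrite exp_0 in hexp.
    replace (m / (exp m - 1)) with ((- m) / (1 - exp m)) by (field; lra).
    apply Rdiv_lt_0_compat; lra.
Qed.

Lemma le_Rpower_of_deriv_ge (f f' : R -> R) (r x : R) :
  (forall y, 0 < y <= 1 -> is_derive f y (f' y)) ->
  (forall y, 0 < y <= 1 -> r * f y <= y * f' y) ->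
  0 < x <= 1 -> f x <= f 1 * Rpower x r.
Proof.
  intros hder hineq hx.
  set (G := fun y => f y * exp (- r * ln y)).
  set (dG := fun y => exp (- r * ln y) / y * (y * f' y - r * f y)).
  assert (hG : forall y, 0 < y <= 1 -> is_derive G y (dG y)).
  { intros y hy.
    assert (hpow : is_derive (fun t => exp (- r * ln t)) y
                     (exp (- r * ln y) * (- r * / y))).
    { auto_derive; [lra | ring]. }
    pose proof (is_derive_mult _ _ _ _ _ (hder y hy) hpow Rmult_comm) as hprod.
    unfold G, dG; eapply is_derive_ext; [reflexivity |].
    replace (exp (- r * ln y) / y * (y * f' y - r * f y))
      with (plus (mult (f' y) (exp (- r * ln y)))
                 (mult (f y) (exp (- r * ln y) * (- r * / y)))) by
      (unfold plus, mult; simpl; field; lra).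
    exact hprod. }
  assert (hmin : Rmin x 1 = x) by (apply Rmin_left; lra).
  assert (hmax : Rmax x 1 = 1) by (apply Rmax_right; lra).
  destruct (MVT_gen G x 1 dG) as [c [hc hmvt]].
  { rewrite hmin, hmax; intros y hy; apply hG; lra. }
  { rewrite hmin, hmax; intros y hy.
    apply continuity_pt_filterlim, (ex_derive_continuous G).
    exists (dG y); apply hG; lra. }
  rewrite hmin, hmax in hc.
  assert (hdG : 0 <= dG c).
  { apply Rmult_le_pos; [apply Rdiv_le_0_compat; [apply Rlt_le, exp_pos | lra] |].
    pose proof (hineq c ltac:(lra)); lra. }
  assert (hGx : G x <= G 1) by nra.
  unfold G in hGx; rewrite ln_1, Rmult_0_r, exp_0, Rmult_1_r in hGx.
  unfold Rpower.
  replace (f x) with (f x * exp (- r * ln x) * exp (r * ln x))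
    by (rewrite Rmult_assoc, <- exp_plus; replace (- r * ln x + r * ln x) with 0 by ring;
        rewrite exp_0; ring).
  apply Rmult_le_compat_r; [apply Rlt_le, exp_pos | exact hGx].
Qed.

Lemma ratio_mul_one_sub_exp_le (mu y : R) : mu <> 0 -> 0 <= y <= 1 ->
  mu / (exp mu - 1) * (1 - exp (- mu * y)) <= y * (mu * exp (- mu * y)).
Proof.
  intros hmu hy; set (r := mu / (exp mu - 1)).
  assert (hchord : r * (exp (mu * y) - 1) <= mu * y).
  { assert (hr : r * (y * (exp mu - 1)) = mu * y).
    { unfold r; field; intro hexp.
      apply hmu, exp_inv; rewrite exp_0; lra. }
    rewrite <- hr at 2; apply Rmult_le_compat_l.
    - apply Rlt_le, div_exp_sub1_gt0, hmu.
    - apply exp_chord_ge, hy. }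
  assert (hinv : exp (mu * y) * exp (- mu * y) = 1)
    by (rewrite <- exp_plus; replace (mu * y + - mu * y) with 0 by ring; apply exp_0).
  replace (r * (1 - exp (- mu * y))) with (r * (exp (mu * y) - 1) * exp (- mu * y))
    by (rewrite Rmult_assoc, Rmult_minus_distr_r, hinv, Rmult_1_l; reflexivity).
  pose proof (Rmult_le_compat_r _ _ _ (Rlt_le _ _ (exp_pos (- mu * y))) hchord).
  lra.
Qed.

Theorem mainTheorem4 (mu x : R) (hmu : mu <> 0) (hx0 : 0 <= x) (hx1 : x <= 1) :
  1 - exp (- mu * x) <= (1 - exp (- mu)) * rpow x (mu / (exp mu - 1)).
Proof.
  unfold rpow; destruct (Rle_dec x 0) as [hx | hx].
  { replace x with 0 by lra; rewrite Rmult_0_r, exp_0; lra. }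
  replace (exp (- mu)) with (exp (- mu * 1)) by (f_equal; ring).
  apply (le_Rpower_of_deriv_ge (fun y => 1 - exp (- mu * y))
           (fun y => mu * exp (- mu * y))); [| | lra].
  - intros y _; auto_derive; [exact I | ring].
  - intros y hy; apply ratio_mul_one_sub_exp_le; [exact hmu | lra].
Qed.
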